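(* Let $2\le n\le m$. Let $u^0$ be the vertex of $Y_{n,m}$ with $u^0_i=1$ for all $1\le i\le m$ and $u^0_0\equiv-\lfloor (m-n)/2\rfloor\pmod n$, and let $d_0=d(u^0,0)$. Then (1) $d_0=\binom{\lfloor (m+n)/2\rfloor+1}{2}+\binom{\lceil (m-n)/2\rceil+1}{2}$; (2) if $2\nmid(m-n)$, let $u^1$ be the vertex with $u^1_i=0$ for $i=\lceil (m+1)/2\rceil$, $u^1_i=1$ for all other $1\le i\le m$, and $u^1_0\equiv-\lfloor (m-n)/2\rfloor\pmod n$; then $d(u^1,0)=d_0+n-\lceil (m+1)/2\rceil$.
   Context: The Yoke graph $Y_{n,m}$ has vertices the tuples $v=(v_0,\dots,v_{m+1})$ with $v_0,v_{m+1}\in\mathbb{Z}_n$, $v_1,\dots,v_m\in\{0,1\}$, $\sum v_i\equiv0\pmod n$ (so a vertex is determined by $v_0,\dots,v_m$); $u\sim v$ iff there is $0\le i\le m$ with $u_j=v_j$ for $j\notin\{i,i+1\}$ and either ($u_i=v_i+1$, $u_{i+1}=v_{i+1}-1$) or ($u_i=v_i-1$, $u_{i+1}=v_{i+1}+1$), buckets mod $n$. $0$ is the all-zero vertex and $d$ is graph distance. *)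

From HB Require Import structures.
From mathcomp Require Import all_boot all_order all_algebra.
Set Implicit Arguments. Unset Strict Implicit. Unset Printing Implicit Defensive.
Import Order.TTheory GRing.Theory Num.Theory.

Section GDist.
Variables (T : finType) (e : rel T).

Definition walkb (u v : T) (k : nat) : bool :=
  [exists p : k.-tuple T, path e u p && (last u p == v)].

Lemma connect_walk (u v : T) : connect e u v -> exists k, walkb u v k.
Proof.
move=> /connectP [p pp ->]; exists (size p); apply/existsP.
by exists (in_tuple p); rewrite /= pp eqxx.
Qed.

(* graph distance: least length of a walk; (0 if unreachable, never used) *)
Definition gdist (u v : T) : nat :=
  match @idP (connect e u v) with
  | ReflectT h => ex_minn (connect_walk h)
  | ReflectF _ => 0
  end.
End GDist.

Local Open Scope ring_scope.
(* A vertex is (v_0, (v_1..v_m)) with v_0 in Z_n (n >= 2) and v_i bits;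
   v_{m+1} = -(v_0 + ... + v_m) mod n is determined. *)
Definition yvert (n m : nat) : finType := ('Z_n * {ffun 'I_m -> bool})%type.

(* coordinate k (0 <= k <= m+1) as an integer; for k = 0, m+1 it is a
   representative of the residue mod n. *)
Definition ycoord (n m : nat) (v : yvert n m) (k : nat) : int :=
  if k == 0%N then (val v.1)%:Z
  else if (k <= m)%N then (nth false (fgraph v.2) k.-1 : nat)%:Z
  else - ((val v.1)%:Z + (\sum_(i < m) (v.2 i : nat))%:Z).

Definition yceq (n m k : nat) (a b : int) : bool :=
  if (k == 0%N) || (k == m.+1) then (a == b %[mod n%:Z])%Z else a == b.

Definition yadj (n m : nat) : rel (yvert n m) := fun u v =>
  [exists i : 'I_m.+1,
     [forall k : 'I_m.+2,
        ((val k != val i) && (val k != (val i).+1)) ==>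
          yceq n m k (ycoord u k) (ycoord v k)]
     && ((yceq n m i (ycoord u i) (ycoord v i + 1)
          && yceq n m i.+1 (ycoord u i.+1) (ycoord v i.+1 - 1))
      || (yceq n m i (ycoord u i) (ycoord v i - 1)
          && yceq n m i.+1 (ycoord u i.+1) (ycoord v i.+1 + 1)))].

Definition ydist (n m : nat) (u v : yvert n m) : nat := gdist (@yadj n m) u v.

Definition yzero (n m : nat) : yvert n m := (0%R, [ffun => false]).

Definition yu0 (n m : nat) : yvert n m :=
  (- (((m - n)%N./2)%:R),  [ffun => true]).

(* u^1 : inner bucket ceil((m+1)/2) = (m+2)/2 (1-indexed) is 0, others 1 *)
Definition yu1 (n m : nat) : yvert n m :=
  (- (((m - n)%N./2)%:R),  [ffun i : 'I_m => (val i).+1 != (m.+2)./2]).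

(* Read v_0 as an integer in [0, n); the heights h_v(j) = v_0 + ... + v_j
   (0 <= j <= m) form a path with steps 0 or 1, and a vertex is determined by
   its path up to adding a multiple of n to all heights.  Moving one ball
   across the wall between buckets i and i+1 changes h_v(i) by +-1 and nothing
   else, so d(v, 0) is the minimum over k of sum_j |h_v(j) + k n|: an edge
   changes this potential by at most 1, and a nonzero path can always be
   brought one step closer to 0 by lowering its first point at the top level
   or raising its last point at the bottom level.
   The heights of u^0 are a + j with a = -floor((m-n)/2) mod n, and the sum
   S_m(a) = sum_{j<=m} |a + j| is symmetric about -m/2 and monotone on either
   side, so over the residue class of a it is minimal at
   a = -(floor((m-n)/2) + n); this yields the binomial formula.  The path of
   u^1 has one flat step, at c = ceil((m+1)/2); its potential is
   S_{m-1}(a) + |a + c - 1|, and both terms are minimal at the same a. *)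

From mathcomp Require Import all_boot all_order all_algebra.
From mathcomp Require Import zify.
Set Implicit Arguments. Unset Strict Implicit. Unset Printing Implicit Defensive.
Import Order.TTheory GRing.Theory Num.Theory.

Lemma gdist_minimal (T : finType) (e : rel T) u v L :
  walkb e u v L -> walkb e u v (gdist e u v) /\ gdist e u v <= L.
Proof.
move=> huv; rewrite /gdist; case: {-}_ / idP => [c | nc].
  by case: ex_minnP => d hd dmin; split=> //; apply: dmin.
case/existsP: huv => p /andP [pp /eqP lp].
by case: nc; apply/connectP; exists p.
Qed.

Section Potential.
Variables (T : finType) (e : rel T) (z : T) (K : Type) (phi : T -> K -> nat).
Hypothesis phi_eq0 : forall v k, phi v k = 0 -> v = z.
Hypothesis phi_target : exists k, phi z k = 0.
Hypothesis phi_edge : forall u w k', e u w -> exists k, phi u k <= (phi w k').+1.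
Hypothesis phi_descent :
  forall v k, 0 < phi v k -> exists w k', e v w /\ (phi w k').+1 = phi v k.

Lemma walkb_potential v k : walkb e v z (phi v k).
Proof.
move Ev: (phi v k) => N; elim: N v k Ev => [|N IH] v k Ev.
  by rewrite (phi_eq0 Ev); apply/existsP; exists [tuple]; rewrite /= eqxx.
have [|w [k' [vw Ew]]] := @phi_descent v k; first by rewrite Ev.
have /existsP [p /andP [pp lp]] := IH w k' (succn_inj (etrans Ew Ev)).
by apply/existsP; exists (cons_tuple w p); rewrite /= vw pp.
Qed.

Lemma potential_le_walkb v L : walkb e v z L -> exists k, phi v k <= L.
Proof.
case/existsP=> -[p /= /eqP sp] /andP [+ /eqP]; rewrite -{}sp.
elim: p v => [|x q IH] v /= => [_ -> | /andP [vx xq] lq].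
  by have [k hk] := phi_target; exists k; rewrite hk.
have [k' hk'] := IH x xq lq; have [k hk] := phi_edge k' vx.
by exists k; apply: leq_trans hk _.
Qed.

Lemma gdist_potential v k :
  (forall k', phi v k <= phi v k') -> gdist e v z = phi v k.
Proof.
move=> kmin; have [hw hle] := gdist_minimal (walkb_potential v k).
have [k' hk'] := potential_le_walkb hw.
by apply/eqP; rewrite eqn_leq hle (leq_trans (kmin k') hk').
Qed.

End Potential.

Local Open Scope ring_scope.

Definition steps01 (g : nat -> int) (M : nat) :=
  forall j, (j < M)%N -> g j.+1 = g j \/ g j.+1 = g j + 1.

Lemma steps01_le g M i j : steps01 g M -> (i <= j <= M)%N -> g i <= g j.
Proof.
move=> sg; elim: j => [|j IH] hij; first by have -> : i = 0%N by lia.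
have [-> //|ne] := eqVneq i j.+1.
by have := IH ltac:(lia); have := sg j ltac:(lia); lia.
Qed.

Lemma steps01_descent g M : steps01 g M -> (exists2 j, (j <= M)%N & g j != 0) ->
  exists i g', [/\ (i <= M)%N, steps01 g' M, forall j, j != i -> g' j = g j,
                   `|g' i - g i| = 1 & `|g' i| + 1 = `|g i|].
Proof.
move=> sg [j0 j0M gj0]; have mono := steps01_le sg.
have [gM_gt0 | gM_le0] := ltrP 0 (g M).
  (* lower the first point at which g reaches its maximum *)
  have [i /eqP gi imin] := ex_minnP (ex_intro (fun j => g j == g M) M (eqxx _)).
  have iM : (i <= M)%N := imin M (eqxx _).
  exists i, (fun j => if j == i then g i - 1 else g j); split=> //; rewrite ?eqxx; try lia.
  - move=> j jM; have := sg j jM.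
    have [ej|ne1] := eqVneq j i.
      subst j; rewrite gtn_eqF //.
      by have := mono i.+1 M ltac:(lia); have := mono i i.+1 ltac:(lia); lia.
    have [ej1|ne2] := eqVneq j.+1 i; last by [].
    subst i; have : g j != g M by apply/negP => /imin; lia.
    by have := mono j j.+1 ltac:(lia); lia.
  - by move=> j /negbTE ->.
(* raise the last point at which g takes its minimum *)
have g0_lt0 : g 0%N < 0 by have := mono 0%N j0 ltac:(lia); have := mono j0 M ltac:(lia); lia.
have ex0 : exists j, (j <= M)%N && (g j == g 0%N) by exists 0%N; rewrite eqxx.
have [i /andP [iM /eqP gi] imax] := ex_maxnP ex0 (fun j Pj => proj1 (andP Pj)).
exists i, (fun j => if j == i then g i + 1 else g j); split=> //; rewrite ?eqxx; try lia.
- move=> j jM; have := sg j jM.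
  have [ej|ne1] := eqVneq j i.
    subst j; have : g i.+1 != g 0%N.
      by apply/negP => gi1; have := imax i.+1; rewrite jM gi1 => /(_ isT); lia.
    by rewrite gtn_eqF //; lia.
  have [ej1|ne2] := eqVneq j.+1 i; last by [].
  by subst i; have := mono 0%N j ltac:(lia); have := mono j j.+1 ltac:(lia); lia.
- by move=> j /negbTE ->.
Qed.

Lemma sum_eq_off_point (N : nat) (F G : 'I_N -> nat) i0 :
  (forall i, i != i0 -> F i = G i) ->
  (\sum_i F i + G i0 = \sum_i G i + F i0)%N.
Proof.
move=> FG; rewrite (bigD1 i0) // [in RHS](bigD1 i0) //=.
rewrite (eq_bigr G); first by lia.
by move=> i /FG.
Qed.

Implicit Types (a b : int) (M p : nat).

Definition sum_abs (M : nat) (a : int) : nat := (\sum_(j < M.+1) absz (a + j%:Z)%R)%N.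

Lemma sum_absSr M a : sum_abs M.+1 a = (sum_abs M a + absz (a + M.+1%:Z)%R)%N.
Proof. by rewrite /sum_abs big_ord_recr. Qed.

Lemma sum_absSl M a : sum_abs M.+1 a = (absz a + sum_abs M (a + 1))%N.
Proof.
rewrite /sum_abs big_ord_recl /= addr0; congr (_ + _)%N.
by apply: eq_bigr => i _; rewrite /bump add1n; congr absz; lia.
Qed.

Lemma sum_abs_rev M a : sum_abs M a = sum_abs M (- a - M%:Z).
Proof.
rewrite /sum_abs (reindex_inj rev_ord_inj); apply: eq_bigr => j _ /=.
by rewrite subSS; have := ltn_ord j; lia.
Qed.

Lemma sum_abs_shift_le M a : 2 * a + M.+1%:Z <= 0 -> (sum_abs M (a + 1) <= sum_abs M a)%N.
Proof. by move=> h; have := sum_absSr M a; have := sum_absSl M a; lia. Qed.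

Lemma sum_abs_antitone M a b :
  a <= b -> 2 * b + M%:Z <= 0 -> (sum_abs M b <= sum_abs M a)%N.
Proof.
move=> ab; have [d -> {ab b}] : exists d : nat, b = a + d%:Z by exists (absz (b - a)); lia.
elim: d => [|d IH] hd; first by rewrite addr0.
have -> : a + d.+1%:Z = a + d%:Z + 1 by lia.
by apply: leq_trans (IH _); [apply: sum_abs_shift_le | ]; lia.
Qed.

Lemma sum_abs_coset_min M (b d t : int) : 0 <= d ->
  2 * b + M%:Z <= 0 <= 2 * b + M%:Z + d -> (sum_abs M b <= sum_abs M (b + t * d))%N.
Proof.
move=> d0 /andP [hl hr]; have [t0 | t1] := lerP t 0.
  have td : t * d <= 0 by apply: mulr_le0_ge0; lia.
  by apply: sum_abs_antitone; lia.
have td : d <= t * d by rewrite ler_peMl // ltW.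
by rewrite [in X in (_ <= X)%N]sum_abs_rev; apply: sum_abs_antitone; lia.
Qed.

Lemma sum_abs_closed M p : (p <= M)%N ->
  sum_abs M (- p%:Z) = ('C(p.+1, 2) + 'C((M - p).+1, 2))%N.
Proof.
move=> pM; rewrite -{1}(subnKC pM); elim: (M - p)%N => [|d IH].
  rewrite addn0 sum_abs_rev (_ : - - p%:Z - p%:Z = 0); last by lia.
  rewrite -bin2_sum big_mkord addn0; apply: eq_bigr => j _; lia.
by rewrite addnS sum_absSr IH (binS d.+1 1) bin1; lia.
Qed.

Lemma sum_abs_flat_step M a c : (0 < c <= M)%N ->
  (\sum_(j < M.+1) absz (a + j%:Z - (c <= j)%N%:Z)%R)%N
    = (sum_abs M.-1 a + absz (a + c%:Z - 1)%R)%N.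
Proof.
case: M => [|M]; first by lia.
elim: M => [|M IH] cM.
  have -> : c = 1%N by lia.
  by rewrite /sum_abs !big_ord_recr !big_ord0 /=; lia.
rewrite big_ord_recr /=; have [-> | cM'] := eqVneq c M.+2.
  rewrite (eq_bigr (fun j : 'I_M.+2 => absz (a + j%:Z)%R)).
    by rewrite ltnSn /sum_abs /=; lia.
  by move=> j _; rewrite leqNgt ltn_ord /= subr0.
have -> : (c <= M.+2)%N by lia.
by rewrite IH /= ?sum_absSr; lia.
Qed.

Lemma normr_le_shift (x d t : int) : 2 * `|x| <= d -> `|x| <= `|x + t * d|.
Proof.
move=> xd; case: (ltrgtP t 0) => [t_lt0 | t_gt0 | ->]; last by rewrite mul0r addr0.
  have td : (t + 1) * d <= 0 by apply: mulr_le0_ge0; lia.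
  by rewrite mulrDl mul1r in td; lia.
have td : 0 <= (t - 1) * d by apply: mulr_ge0; lia.
by rewrite mulrBl mul1r in td; lia.
Qed.

Section Yoke.
Variables n m : nat.
Hypothesis n_gt1 : (1 < n)%N.
Implicit Types (u v w : yvert n m) (f g h : nat -> int).

Definition yheight v (j : nat) : int := \sum_(k < j.+1) ycoord v k.

Definition ybuckets h (k : nat) : int :=
  if k == 0%N then h 0%N else if (k <= m)%N then h k - h k.-1 else - h m.

Lemma val_yvert_lt v : (val v.1 < n)%N.
Proof. by change (nat_of_ord v.1 < n)%N; have := ltn_ord v.1; have := Zp_cast n_gt1; lia. Qed.

Lemma ycoord_bit v (i : 'I_m) : ycoord v i.+1 = v.2 i.
Proof. by rewrite /ycoord /= ltn_ord nth_fgraph_ord. Qed.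

Lemma yheight0 v : yheight v 0 = (val v.1)%:Z.
Proof. by rewrite /yheight big_ord1. Qed.

Lemma yheightS v j : yheight v j.+1 = yheight v j + ycoord v j.+1.
Proof. by rewrite /yheight big_ord_recr. Qed.

Lemma steps01_yheight v : steps01 (yheight v) m.
Proof.
move=> j jm; rewrite yheightS (ycoord_bit v (Ordinal jm)).
by case: (v.2 _); [right | left; rewrite addr0].
Qed.

Lemma ycoord_ybuckets v k : ycoord v k = ybuckets (yheight v) k.
Proof.
rewrite /ybuckets; case: k => [|k] /=; first by rewrite yheight0.
case: ifP => km; first by rewrite yheightS addrC addKr.
have -> : yheight v m = (val v.1)%:Z + (\sum_(i < m) v.2 i : nat)%:Z.
  rewrite /yheight big_ord_recl; congr (_ + _); rewrite -natz natr_sum.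
  by apply: eq_bigr => i _; rewrite lift0 ycoord_bit natz.
by rewrite /ycoord /= km.
Qed.

Lemma ybuckets_eqmodP f g :
  (forall k, (k <= m.+1)%N -> yceq n m k (ybuckets f k) (ybuckets g k)) <->
  exists c : int, forall j, (j <= m)%N -> f j = g j + c * n%:Z.
Proof.
split=> [H | [c fg] k km].
  have := H 0%N isT; rewrite /yceq /ybuckets /= eqz_mod_dvd => /dvdzP [c hc].
  exists c; elim=> [|j IH] jm; first by lia.
  have := H j.+1 ltac:(lia); rewrite /yceq /ybuckets /= jm.
  by rewrite (_ : (j.+1 == m.+1) = false) /=; [move/eqP; lia | lia].
rewrite /yceq /ybuckets; case: eqP => [-> | k0] /=.
  by rewrite eqz_mod_dvd; apply/dvdzP; exists c; rewrite fg //; lia.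
case: eqP => [-> | km1] /=; rewrite ?ltnn.
  by rewrite eqz_mod_dvd; apply/dvdzP; exists (- c); rewrite fg //; lia.
by rewrite (_ : (k <= m)%N); [apply/eqP; rewrite !fg //; lia | lia].
Qed.

Lemma ybuckets_bump h i s k : (i <= m)%N -> (k <= m.+1)%N ->
  ybuckets (fun j => h j + (j == i)%:R * s) k
    = ybuckets h k + ((k == i)%:R - (k == i.+1)%:R) * s.
Proof.
move=> im km; rewrite /ybuckets.
case: eqP => [->|k0]; last case: ifP => km'; lia.
Qed.

Lemma yadj_shiftP u w :
  yadj u w <-> exists (i : 'I_m.+1) (s : int), (s = 1 \/ s = -1) /\
    forall k, (k <= m.+1)%N ->
      yceq n m k (ycoord u k) (ycoord w k + ((k == i)%:R - (k == i.+1)%:R) * s).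
Proof.
split.
  case/existsP=> i /andP [/forallP off dir].
  have [s [s1 hi hi1]] : exists s : int, [/\ s = 1 \/ s = -1,
      yceq n m i (ycoord u i) (ycoord w i + s)
    & yceq n m i.+1 (ycoord u i.+1) (ycoord w i.+1 - s)].
    by case/orP: dir => /andP [h1 h2]; [exists 1 | exists (-1)]; rewrite ?opprK; split; auto.
  exists i, s; split=> // k km.
  have [->|ki] := eqVneq k i; first by rewrite (_ : (_ - _) * s = s) //; lia.
  have [->|ki1] := eqVneq k i.+1; first by rewrite (_ : (_ - _) * s = - s) //; lia.
  rewrite (_ : (_ - _) * s = 0) ?addr0; last by lia.
  by have /= := off (Ordinal (km : (k < m.+2)%N)); rewrite ki ki1.
case=> i [s [s1 H]]; apply/existsP; exists i; apply/andP; split.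
  apply/forallP=> k; apply/implyP=> /andP [ki ki1].
  have := H k (ltn_ord k); rewrite (_ : (_ - _) * s = 0) ?addr0 //.
  by move: ki ki1 => /= ki ki1; lia.
have := H i (leqW (ltn_ord i)); have := H i.+1 (ltn_ord i).
rewrite (_ : (_ - _) * s = - s); last by lia.
rewrite (_ : (_ - _) * s = s); last by lia.
by case: s1 => -> h1 h2; rewrite ?opprK in h1; apply/orP; [left | right]; rewrite h1 h2.
Qed.

Lemma yadjP u w :
  yadj u w <-> exists (i : 'I_m.+1) (c : int),
    (forall j, (j <= m)%N -> j != i -> yheight u j = yheight w j + c * n%:Z) /\
    `|yheight u i - (yheight w i + c * n%:Z)| = 1.
Proof.
have bumpP (i : 'I_m.+1) s :
    (forall k, (k <= m.+1)%N ->
       yceq n m k (ycoord u k) (ycoord w k + ((k == i)%:R - (k == i.+1)%:R) * s))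
    <-> exists c : int, forall j, (j <= m)%N ->
       yheight u j = yheight w j + (j == i)%:R * s + c * n%:Z.
  have E k : (k <= m.+1)%N -> ybuckets (fun j => yheight w j + (j == i)%:R * s) k
                              = ycoord w k + ((k == i)%:R - (k == i.+1)%:R) * s.
    by move=> km; rewrite (ybuckets_bump _ _ (ltn_ord i) km) -ycoord_ybuckets.
  rewrite -ybuckets_eqmodP.
  by split=> H k km; move: (H k km); rewrite E // -ycoord_ybuckets.
rewrite yadj_shiftP; split.
  case=> i [s [s1 /bumpP [c hc]]]; exists i, c.
  by split=> [j jm ji|]; [rewrite (hc j jm) | rewrite (hc i (ltn_ord i))]; lia.
case=> i [c [off hi]]; exists i, (yheight u i - (yheight w i + c * n%:Z)).
split; first by lia.
apply/bumpP; exists c => j jm; have [->|ji] := eqVneq j i; first by lia.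
by rewrite off //; lia.
Qed.

Lemma yheight_inj u w (c : int) :
  (forall j, (j <= m)%N -> yheight u j = yheight w j + c * n%:Z) -> u = w.
Proof.
move=> uw; have := uw 0%N isT; rewrite !yheight0 => h0.
have c0 : c = 0.
  have := val_yvert_lt u; have := val_yvert_lt w.
  case: (ltrgtP c 0) => // hc.
    have cn : 0 <= (- c - 1) * n%:Z by apply: mulr_ge0; lia.
    by lia.
  have cn : 0 <= (c - 1) * n%:Z by apply: mulr_ge0; lia.
  by lia.
case: u w uw h0 => [a f] [b g] uw /=.
rewrite c0 mul0r addr0 => /eqP; rewrite eqz_nat => /eqP ab.
congr pair; first exact: val_inj.
apply/ffunP=> i; have := uw i.+1 (ltn_ord i); rewrite !yheightS uw ?(ltnW (ltn_ord i)) //.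
by rewrite !ycoord_bit /=; case: (f i); case: (g i) => //= h; exfalso; lia.
Qed.

Definition yvert_of_height h : yvert n m :=
  (inZp (absz (h 0%N %% n%:Z)%Z), [ffun i : 'I_m => h i.+1 - h i == 1]).

Lemma yheight_yvert_of_height h : steps01 h m ->
  exists c : int, forall j, (j <= m)%N -> yheight (yvert_of_height h) j = h j + c * n%:Z.
Proof.
move=> sh; exists (- (h 0%N %/ n%:Z)%Z); elim=> [|j IH] jm.
  rewrite yheight0 /= Zp_cast // modn_small; last first.
    by have := @ltz_pmod (h 0%N) n%:Z ltac:(lia); lia.
  have := divz_eq (h 0%N) n%:Z; have := @modz_ge0 (h 0%N) n%:Z ltac:(lia); lia.
rewrite yheightS IH 1?ltnW // (ycoord_bit _ (Ordinal jm)) ffunE /=.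
by case: (sh j jm) => ->; rewrite ?eqxx /=; lia.
Qed.

Lemma yheight_yzero j : (j <= m)%N -> yheight (yzero n m) j = 0.
Proof.
elim: j => [|j IH] jm; first by rewrite yheight0.
by rewrite yheightS IH 1?ltnW // (ycoord_bit _ (Ordinal jm)) ffunE.
Qed.

Definition ypot v (k : int) : nat :=
  (\sum_(j < m.+1) absz (yheight v j + k * n%:Z)%R)%N.

Lemma ypot_eq0 v k : ypot v k = 0%N -> v = yzero n m.
Proof.
move/eqP; rewrite sum_nat_eq0 => /forallP v0.
apply: (@yheight_inj _ _ (- k)) => j jm.
have := v0 (Ordinal (jm : (j < m.+1)%N)); rewrite yheight_yzero //=; lia.
Qed.

Lemma ypot_yzero : ypot (yzero n m) 0 = 0%N.
Proof. by apply: big1 => j _; rewrite (yheight_yzero (ltn_ord j)) mul0r. Qed.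

Lemma ypot_edge u w k' : yadj u w -> exists k, (ypot u k <= (ypot w k').+1)%N.
Proof.
case/yadjP=> i [c [off hi]]; exists (k' - c).
have : (ypot u (k' - c) + absz (yheight w i + k' * n%:Z)%R
        = ypot w k' + absz (yheight u i + (k' - c) * n%:Z)%R)%N.
  by apply: sum_eq_off_point => j ji; rewrite (off j (ltn_ord j) ji); congr absz; lia.
by lia.
Qed.

Lemma ypot_descent v k : (0 < ypot v k)%N ->
  exists w k', yadj v w /\ (ypot w k').+1 = ypot v k.
Proof.
move=> pos; pose g j := yheight v j + k * n%:Z.
have sg : steps01 g m by move=> j jm; rewrite /g; case: (steps01_yheight v jm) => ->; lia.
have [j0 j0m gj0] : exists2 j, (j <= m)%N & g j != 0.
  move: pos; rewrite lt0n sum_nat_eq0 negb_forall => /existsP [j /= gj].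
  by exists j; [exact: (ltn_ord j) | rewrite /g; lia].
have [i [g' [im sg' off hi hi']]] := steps01_descent sg (ex_intro2 _ _ j0 j0m gj0).
have [q hq] := yheight_yvert_of_height sg'.
exists (yvert_of_height g'), (- q); split.
  apply/yadjP; exists (Ordinal (im : (i < m.+1)%N)), (- (q + k)) => /=.
  rewrite mulNr mulrDl.
  split=> [j jm ji|]; rewrite hq //; first by rewrite off // /g; lia.
  by move: hi; rewrite /g; lia.
have : ypot (yvert_of_height g') (- q) + absz (g i) = (ypot v k + absz (g' i))%N.
  rewrite /ypot (eq_bigr (fun j : 'I_m.+1 => absz (g' j))); last first.
    by move=> j _; rewrite (hq j (ltn_ord j)); congr absz; lia.
  by apply: (@sum_eq_off_point _ _ _ (Ordinal (im : (i < m.+1)%N))) => j ji; rewrite off.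
by lia.
Qed.

Lemma ydist_ypot v k :
  (forall k', (ypot v k <= ypot v k')%N) -> ydist v (yzero n m) = ypot v k.
Proof.
apply: gdist_potential.
- exact: ypot_eq0.
- by exists 0; exact: ypot_yzero.
- by move=> u w k' /ypot_edge.
- exact: ypot_descent.
Qed.

Lemma val_Zp_oppn p : exists q : int, (val (- (p%:R) : 'Z_n))%:Z = - p%:Z + q * n%:Z.
Proof.
have := congr1 val (addNr (p%:R : 'Z_n)).
rewrite /= (val_Zp_nat n_gt1) Zp_cast // modnDmr => /eqP /dvdnP [q hq].
by exists q; lia.
Qed.

Lemma yheight_yu0 j : (j <= m)%N -> yheight (yu0 n m) j = (val (yu0 n m).1)%:Z + j%:Z.
Proof.
elim: j => [|j IH] jm; first by rewrite yheight0 addr0.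
by rewrite yheightS IH ?(ltnW jm) // (ycoord_bit _ (Ordinal jm)) ffunE; lia.
Qed.

Lemma yheight_yu1 j : (j <= m)%N ->
  yheight (yu1 n m) j = (val (yu1 n m).1)%:Z + j%:Z - ((m.+2)./2 <= j)%N%:Z.
Proof.
elim: j => [|j IH] jm; first by rewrite yheight0 /=; lia.
by rewrite yheightS IH ?(ltnW jm) // (ycoord_bit _ (Ordinal jm)) ffunE /=; lia.
Qed.

Lemma ypot_yu0 k :
  ypot (yu0 n m) k = sum_abs m ((val (yu0 n m).1)%:Z + k * n%:Z).
Proof.
by apply: eq_bigr => j _; rewrite (yheight_yu0 (ltn_ord j)); congr absz; lia.
Qed.

Lemma ypot_yu1 k : (0 < m)%N ->
  ypot (yu1 n m) k = (sum_abs m.-1 ((val (yu1 n m).1)%:Z + k * n%:Z)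
                      + absz ((val (yu1 n m).1)%:Z + k * n%:Z + (m.+2)./2%:Z - 1)%R)%N.
Proof.
move=> m_gt0; rewrite -sum_abs_flat_step; last by lia.
by apply: eq_bigr => j _; rewrite (yheight_yu1 (ltn_ord j)); congr absz; lia.
Qed.

Lemma ydist_yu0 : (n <= m)%N ->
  ydist (yu0 n m) (yzero n m) = sum_abs m (- ((m - n)./2 + n)%N%:Z).
Proof.
move=> nm; have [q hq] := val_Zp_oppn ((m - n)./2).
(* -(floor((m-n)/2) + n) is the point of the class of u^0_0 just below -m/2 *)
rewrite (@ydist_ypot _ (- q - 1)) => [|k]; rewrite !ypot_yu0 /= hq.
  by congr sum_abs; lia.
have -> : - ((m - n)./2)%:Z + q * n%:Z + k * n%:Z
          = - ((m - n)./2 + n)%N%:Z + (q + k + 1) * n%:Z by lia.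
rewrite (_ : _ + (- q - 1) * n%:Z = - ((m - n)./2 + n)%N%:Z); last by lia.
by apply: sum_abs_coset_min; lia.
Qed.

Lemma ydist_yu1 : (n <= m)%N -> odd (m - n) ->
  ydist (yu1 n m) (yzero n m)
    = (sum_abs m.-1 (- ((m - n)./2 + n)%N%:Z)
       + absz (- ((m - n)./2 + n)%N%:Z + (m.+2)./2%:Z - 1)%R)%N.
Proof.
move=> nm odd_mn; have [q hq] := val_Zp_oppn ((m - n)./2).
have m_gt0 : (0 < m)%N by lia.
rewrite (@ydist_ypot _ (- q - 1)) => [|k]; rewrite !ypot_yu1 //= hq.
  by congr (sum_abs _ _ + absz _)%N; lia.
have -> : - ((m - n)./2)%:Z + q * n%:Z + k * n%:Z
          = - ((m - n)./2 + n)%N%:Z + (q + k + 1) * n%:Z by lia.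
rewrite (_ : _ + (- q - 1) * n%:Z = - ((m - n)./2 + n)%N%:Z); last by lia.
apply: leq_add; first by apply: sum_abs_coset_min; lia.
have := @normr_le_shift (- ((m - n)./2 + n)%N%:Z + (m.+2)./2%:Z - 1) n%:Z (q + k + 1).
by rewrite /=; lia.
Qed.

End Yoke.

Theorem lemma4p24 (n m : nat) (h2n : (2 <= n)%N) (hnm : (n <= m)%N) :
  ydist (yu0 n m) (yzero n m)
    = ('C(((m + n)./2).+1, 2) + 'C((uphalf (m - n)).+1, 2))%N
  /\ (odd (m - n) ->
      (ydist (yu1 n m) (yzero n m) + uphalf m.+1
        = ydist (yu0 n m) (yzero n m) + n)%N).
Proof.
rewrite ydist_yu0 //; split.
  rewrite sum_abs_closed; last by lia.
  by congr ('C(_.+1, 2) + 'C(_.+1, 2))%N; lia.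
move=> odd_mn; rewrite ydist_yu1 //.
by have := sum_absSr m.-1 (- ((m - n)./2 + n)%N%:Z); rewrite prednK; lia.
Qed.
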